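(* Let $n$ be a positive even integer. Then $\mathrm{VR}(T_{n,n};\operatorname{diam}(T_{n,n})-1)\simeq S^{\frac{n^2}{2}-1}$.
   Context: For a metric space $X$ and $r\ge 0$, $\mathrm{VR}(X;r)$ is the simplicial complex on vertex set $X$ whose simplices are the finite nonempty subsets of diameter at most $r$. $T_{n,n}$ is the set $\{0,\dots,n-1\}^2$ with metric $d((i,j),(i',j'))=\min\{|i-i'|,n-|i-i'|\}+\min\{|j-j'|,n-|j-j'|\}$; $\operatorname{diam}(T_{n,n})$ is its diameter (equal to $n$ for even $n$). *)

From mathcomp Require Import all_boot all_order all_algebra.
From mathcomp Require Import all_classical all_reals topology.
From mathcomp Require Import function_spaces normedtype.
Set Implicit Arguments. Unset Strict Implicit. Unset Printing Implicit Defensive.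
Import Order.TTheory GRing.Theory Num.Theory.
Import numFieldNormedType.Exports.
Local Open Scope classical_set_scope.
Local Open Scope ring_scope.

Definition absdn (a b : nat) : nat := ((a - b) + (b - a))%N.

(* cyclic distance on Z/n, with representatives 0..n-1 *)
Definition cycd (n a b : nat) : nat := minn (absdn a b) (n - absdn a b).

Definition torus_dist (n : nat) (p q : 'I_n * 'I_n) : nat :=
  (cycd n p.1 q.1 + cycd n p.2 q.2)%N.

Definition fdiam (V : finType) (d : V -> V -> nat) : nat :=
  \max_(pq : V * V) d pq.1 pq.2.

Definition VR_simplex (V : finType) (d : V -> V -> nat) (r : nat)
  (s : {set V}) : bool :=
  (s != finset.set0) && [forall u in s, forall v in s, (d u v <= r)%N].

(* geometric realization of a finite simplicial complex K on vertex set V: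
   points are barycentric-coordinate functions V -> R (nonneg, summing to 1)
   whose support is a simplex of K; topology: subspace of R^V (product). *)
Definition realization (R : realType) (V : finType) (K : pred {set V})
  : set {ptws V -> R} :=
  [set x | (forall v, 0 <= x v) /\ \sum_(v : V) x v = 1
           /\ K (finset.finset (fun v => 0 < x v))].

Definition sphere (R : realType) (m : nat) : set 'rV[R]_(m.+1) :=
  [set y | \sum_(i < m.+1) (y ord0 i) ^+ 2 = 1].

(* f, g : A -> B (represented on ambient spaces) are homotopic as maps A -> B *)
Definition homotopic (R : realType) (X Y : topologicalType)
  (A : set X) (B : set Y) (f g : X -> Y) : Prop :=
  exists H : R * X -> Y,
    {within `[0, 1]%classic `*` A, continuous H} /\
    (forall t x, `[0, 1]%classic t -> A x -> B (H (t, x))) /\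
    (forall x, A x -> H (0, x) = f x) /\
    (forall x, A x -> H (1, x) = g x).

Definition homotopy_equivalent (R : realType) (X Y : topologicalType)
  (A : set X) (B : set Y) : Prop :=
  exists (f : X -> Y) (g : Y -> X),
    [/\ {within A, continuous f}, f @` A `<=` B,
        {within B, continuous g} & g @` B `<=` A] /\
    (homotopic R A A (g \o f) id /\ homotopic R B B (f \o g) id).

Arguments realization R {V} K _.
Arguments sphere : clear implicits.
Arguments homotopic R {X Y} A B f g.
Arguments homotopy_equivalent R {X Y} A B.

(* The diameter of T_{n,n} is n, and the pairs at distance n are exactly the
   antipodal pairs {u, u + (n/2, n/2)}.  Hence the simplices of VR(T_{n,n}; n - 1)
   are the nonempty sets containing no antipodal pair: this is the boundary of
   the cross-polytope on the n^2/2 antipodal pairs.  Choosing one point v in each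
   pair, a barycentric point x is sent to the vector (x_v - x_{-v})_v normalized
   in l2; the inverse sends y to the positive and negative parts of its
   coordinates, normalized in l1.  This homeomorphism onto the sphere is in
   particular a homotopy equivalence. *)

From mathcomp Require Import all_boot all_order all_algebra.
From mathcomp Require Import all_classical all_reals topology.
From mathcomp Require Import function_spaces normedtype.
From mathcomp Require Import realfun zify.
Import numFieldNormedType.Exports.
Import Order.TTheory GRing.Theory Num.Theory.
Set Implicit Arguments. Unset Strict Implicit. Unset Printing Implicit Defensive.

Definition cross_complex (V : finType) (sig : V -> V) (s : {set V}) : bool :=
  (s != finset.set0) && [forall u in s, sig u \notin s].

Lemma involution_transversal (V : finType) (sig : V -> V) (m : nat) :
    involutive sig -> (forall v, sig v != v) -> #|V| = m.*2 ->
  exists (rep : 'I_m -> V) (idx : V -> 'I_m),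
    [/\ cancel rep idx, forall v, idx (sig v) = idx v
      & forall v, rep (idx v) = v \/ rep (idx v) = sig v].
Proof.
move=> sigK sig_neq cardV.
pose S := [set v | enum_rank v < enum_rank (sig v)].
have sigS v : (sig v \in S) = (v \notin S).
  have rank_neq : enum_rank (sig v) != enum_rank v by rewrite (inj_eq enum_rank_inj).
  by rewrite !inE sigK -leqNgt ltn_neqAle rank_neq.
have cardS : #|S| = m.
  have compS : ~: S = sig @: S.
    rewrite (can_imset_pre _ sigK); apply/setP => v.
    by rewrite finset.in_setC -sigS !inE.
  move: cardV; rewrite -(cardsC S) compS card_imset ?addnn; last exact: inv_inj.
  exact: double_inj.
pose canon v := if v \in S then v else sig v.
have canonS v : canon v \in S by rewrite /canon; case: ifP => // /negbT; rewrite -sigS.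
pose rep k := enum_val (cast_ord (esym cardS) k).
pose idx v := cast_ord cardS (enum_rank_in (canonS v) (canon v)).
have rep_inj : injective rep by move=> i j /enum_val_inj /cast_ord_inj.
have rep_idx v : rep (idx v) = canon v by rewrite /rep /idx cast_ordK enum_rankK_in.
exists rep, idx; split=> [k|v|v].
- by apply: rep_inj; rewrite rep_idx /canon enum_valP.
- by apply: rep_inj; rewrite !rep_idx /canon sigS sigK; case: (v \in S).
- by rewrite rep_idx /canon; case: ifP; [left|right].
Qed.

Definition half_turn n (a : 'I_n) : 'I_n :=
  Ordinal (ltn_pmod (a + n./2) (leq_ltn_trans (leq0n a) (ltn_ord a))).

Definition torus_antipode n (u : 'I_n * 'I_n) : 'I_n * 'I_n :=
  (half_turn u.1, half_turn u.2).

Section EvenTorus.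
Variable n : nat.
Hypothesis n_even : ~~ odd n.

Let n_halves : n = n./2 + n./2.
Proof. by rewrite addnn -[in LHS](odd_double_half n) (negbTE n_even). Qed.

Lemma half_turnE (a : 'I_n) :
  half_turn a = (if a < n./2 then a + n./2 else a - n./2) :> nat.
Proof.
have := n_halves; have := ltn_ord a; rewrite /=; case: ifP => a_lt a_lt_n n_eq.
  by rewrite modn_small //; lia.
have -> : a + n./2 = (a - n./2) + n by lia.
by rewrite modnDr modn_small //; lia.
Qed.

Lemma half_turnK : involutive (@half_turn n).
Proof.
move=> a; apply: ord_inj; rewrite !half_turnE; have := ltn_ord a; have := n_halves.
by move=> n_eq a_lt_n; case: (ltnP a n./2) => a_lt; case: ifP; lia.
Qed.

Lemma half_turn_neq (a : 'I_n) : half_turn a != a.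
Proof.
rewrite -(inj_eq (@ord_inj n)) half_turnE; have := ltn_ord a; have := n_halves.
by case: ifP; lia.
Qed.

Lemma torus_antipodeK : involutive (@torus_antipode n).
Proof. by case=> a b; rewrite /torus_antipode /= !half_turnK. Qed.

Lemma torus_antipode_neq (u : 'I_n * 'I_n) : torus_antipode u != u.
Proof. by case: u => a b; rewrite xpair_eqE negb_and half_turn_neq. Qed.

Lemma cycd_le_half (a b : 'I_n) : cycd n a b <= n./2.
Proof.
by rewrite /cycd /absdn; have := ltn_ord a; have := ltn_ord b; have := n_halves; lia.
Qed.

Lemma cycd_eq_half (a b : 'I_n) : (cycd n a b == n./2) = (b == half_turn a).
Proof.
rewrite -(inj_eq (@ord_inj n)) half_turnE /cycd /absdn.
have := ltn_ord a; have := ltn_ord b; have := n_halves.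
by case: ifP => a_lt n_eq b_lt a_lt'; apply/eqP/eqP; lia.
Qed.

Lemma torus_dist_le (u v : 'I_n * 'I_n) : torus_dist u v <= n.
Proof.
rewrite /torus_dist; have := cycd_le_half u.1 v.1; have := cycd_le_half u.2 v.2.
by have := n_halves; lia.
Qed.

Lemma torus_dist_eq (u v : 'I_n * 'I_n) :
  (torus_dist u v == n) = (v == torus_antipode u).
Proof.
case: u v => a b [c d]; rewrite /torus_dist /torus_antipode /= xpair_eqE -!cycd_eq_half.
have := cycd_le_half a c; have := cycd_le_half b d; have := n_halves.
by move=> n_eq le1 le2; apply/eqP/andP => [?|[/eqP ? /eqP ?]]; [split; apply/eqP|]; lia.
Qed.

Lemma card_torus : 0 < n -> #|{: 'I_n * 'I_n}| = ((n * n) %/ 2 - 1).+1.*2.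
Proof. by move=> n_gt0; rewrite card_prod card_ord; have := n_halves; nia. Qed.

Lemma fdiam_torus : 0 < n -> fdiam (@torus_dist n) = n.
Proof.
move=> n_gt0; apply/eqP; rewrite eqn_leq; apply/andP; split.
  by apply/bigmax_leqP => uv _; exact: torus_dist_le.
pose u : 'I_n * 'I_n := (Ordinal n_gt0, Ordinal n_gt0).
have antipode_far : torus_dist u (torus_antipode u) = n.
  by apply/eqP; rewrite torus_dist_eq.
by rewrite -[leqLHS]antipode_far; exact: (leq_bigmax (u, torus_antipode u)).
Qed.

Lemma VR_torus_cross_complex : 0 < n ->
  VR_simplex (@torus_dist n) (fdiam (@torus_dist n) - 1) =
  cross_complex (@torus_antipode n).
Proof.
move=> n_gt0; apply/funext => s; rewrite /VR_simplex /cross_complex fdiam_torus //.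
have near (u v : 'I_n * 'I_n) : (torus_dist u v <= n - 1) = (v != torus_antipode u).
  by rewrite -torus_dist_eq; have := torus_dist_le u v; case: eqP; lia.
congr andb; apply: eq_forallb => u; congr implb.
apply/forallP/idP => [all_near|]; last first.
  move=> antipode_notin v; apply/implyP => v_in; rewrite near.
  by apply: contraNneq antipode_notin => <-.
apply/negP => antipode_in; move: (all_near (torus_antipode u)).
by rewrite antipode_in near eqxx.
Qed.

End EvenTorus.

Local Open Scope classical_set_scope.
Local Open Scope ring_scope.

Lemma ptws_continuous_at (R : realType) (V : finType) (T : topologicalType)
    (F : T -> {ptws V -> R}) (x : T) :
  (forall v, {for x, continuous (fun t => F t v)}) -> {for x, continuous F}.
Proof.
move=> Fv; apply/cvg_sup => v A /=; rewrite nbhsE => -[B [[U oU <-] Bx] BA].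
have /Fv Fx : nbhs (F x v) U by rewrite nbhsE; exists U.
suff : nbhs x (F @^-1` A) by rewrite nbhsE.
by apply: (@filterS _ (nbhs x) _ (fun t => U (F t v))) Fx => t Ut; exact: BA.
Qed.

Lemma mx_continuous_at (R : realType) m n (T : topologicalType)
    (F : T -> 'M[R]_(m, n)) (x : T) :
  (forall i j, {for x, continuous (fun t => F t i j)}) -> {for x, continuous F}.
Proof.
move=> Fij; apply/cvg_mx_entourageP => A entA.
apply: filter_forall => i; apply: filter_forall => j.
have /cvg_entourageP /(_ A entA) FA := Fij i j.
by apply: (@filterS _ (nbhs x) _ _ _ _ FA) => t /=; rewrite inE.
Qed.

Lemma sum_continuous (R : realType) (I : finType) (T : topologicalType)
    (F : I -> T -> R) :
  (forall i, continuous (F i)) -> continuous (fun t => \sum_i F i t).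
Proof.
by move=> Fc; apply: continuous_big => [|i _]; [exact: add_continuous|exact: Fc].
Qed.

Lemma homeomorphic_homotopy_equivalent (R : realType) (X Y : topologicalType)
    (A : set X) (B : set Y) (f : X -> Y) (g : Y -> X) :
  {within A, continuous f} -> f @` A `<=` B ->
  {within B, continuous g} -> g @` B `<=` A ->
  (forall x, A x -> g (f x) = x) -> (forall y, B y -> f (g y) = y) ->
  homotopy_equivalent R A B.
Proof.
have homotopic_id (Z : topologicalType) (C : set Z) (h : Z -> Z) :
    (forall z, C z -> h z = z) -> homotopic R C C h id.
  move=> hC; exists (fun p : R * Z => p.2); split.
    by apply: continuous_subspaceT => p; exact: cvg_snd.
  by split=> [t z _ //|]; split=> z Cz /=; rewrite ?hC.
move=> fc fAB gc gBA gf fg; exists f, g; split; first by split.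
by split; apply: homotopic_id.
Qed.

Section PositiveNegativeParts.
Variable R : realDomainType.
Implicit Type a : R.

Lemma maxr0_addNr0 a : Num.max a 0 + Num.max (- a) 0 = `|a|.
Proof.
have [a_ge0|a_lt0] := leP 0 a.
  by rewrite (max_idPr _) ?addr0 ?ger0_norm // oppr_le0.
by rewrite (max_idPl _) ?add0r ?ltr0_norm // oppr_ge0 ltW.
Qed.

Lemma maxr0_subNr0 a : Num.max a 0 - Num.max (- a) 0 = a.
Proof.
have [a_ge0|a_lt0] := leP 0 a.
  by rewrite (max_idPr _) ?subr0 // oppr_le0.
by rewrite (max_idPl _) ?sub0r ?opprK // oppr_ge0 ltW.
Qed.

Lemma maxr0_or_maxNr0_eq0 a : Num.max a 0 = 0 \/ Num.max (- a) 0 = 0.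
Proof.
have [a_ge0|a_lt0] := leP 0 a; [right|left] => //.
by apply/max_idPr; rewrite oppr_le0.
Qed.

End PositiveNegativeParts.

Section RowNorms.
Variables (R : realType) (m : nat).
Implicit Types (y : 'rV[R]_m) (c : R).

Definition l1norm y : R := \sum_i `|y ord0 i|.
Definition l2norm y : R := Num.sqrt (\sum_i y ord0 i ^+ 2).
Definition normalize y : 'rV[R]_m := (l2norm y)^-1 *: y.

Lemma l1norm_eq0 y : (l1norm y == 0) = (y == 0).
Proof.
apply/idP/eqP => [/eqP /psumr_eq0P y0|->]; last first.
  by rewrite /l1norm big1 // => i _; rewrite mxE normr0.
apply/rowP => i; apply/eqP; rewrite mxE -normr_eq0; apply/eqP.
by rewrite y0.
Qed.

Lemma l2norm_eq0 y : (l2norm y == 0) = (y == 0).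
Proof.
rewrite sqrtr_eq0 le_eqVlt ltNge sumr_ge0 ?orbF => [|i _]; last exact: sqr_ge0.
apply/idP/eqP => [/eqP /psumr_eq0P y0|->]; last first.
  by rewrite big1 // => i _; rewrite mxE expr0n.
apply/rowP => i; apply/eqP; rewrite mxE -sqrf_eq0 y0 // => j _; exact: sqr_ge0.
Qed.

Lemma l1norm_gt0 y : (0 < l1norm y) = (y != 0).
Proof. by rewrite lt_def l1norm_eq0 /l1norm sumr_ge0 ?andbT. Qed.

Lemma l2norm_gt0 y : (0 < l2norm y) = (y != 0).
Proof. by rewrite lt_def l2norm_eq0 sqrtr_ge0 andbT. Qed.

Lemma l1normZ c y : l1norm (c *: y) = `|c| * l1norm y.
Proof. by rewrite /l1norm mulr_sumr; apply: eq_bigr => i _; rewrite mxE normrM. Qed.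

Lemma l2normZ c y : l2norm (c *: y) = `|c| * l2norm y.
Proof.
rewrite /l2norm -sqrtr_sqr -sqrtrM ?sqr_ge0 // mulr_sumr.
by congr Num.sqrt; apply: eq_bigr => i _; rewrite mxE exprMn.
Qed.

Lemma normalizeZ c y : 0 < c -> normalize (c *: y) = normalize y.
Proof.
move=> c_gt0; rewrite /normalize l2normZ gtr0_norm // scalerA invfM mulrAC.
by rewrite mulVf ?mul1r // gt_eqF.
Qed.

Lemma l1norm_continuous : continuous l1norm.
Proof.
apply: sum_continuous => i y; exact: (cvg_norm (@coord_continuous R 1 m ord0 i y)).
Qed.

Lemma l2norm_continuous : continuous l2norm.
Proof.
move=> y; apply: continuous_comp; last exact: sqrt_continuous.
apply: sum_continuous => i {}y.
have coord_cont := @coord_continuous R 1 m ord0 i y.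
exact: (cvgM coord_cont coord_cont).
Qed.

Lemma normalize_continuous_at y : y != 0 -> {for y, continuous normalize}.
Proof.
rewrite -l2norm_eq0 => y_neq0.
exact: cvgZ (cvgV y_neq0 (@l2norm_continuous y)) cvg_id.
Qed.

End RowNorms.

Section Sphere.
Variables (R : realType) (M : nat).
Implicit Types (y : 'rV[R]_M.+1).

Lemma sphereE y : sphere R M y <-> l2norm y = 1.
Proof.
rewrite /sphere /l2norm; split=> [->|]; first exact: sqrtr1.
move/(congr1 (fun r => r ^+ 2)); rewrite sqr_sqrtr ?expr1n //.
by rewrite sumr_ge0 // => i _; rewrite sqr_ge0.
Qed.

Lemma sphere_neq0 y : sphere R M y -> y != 0.
Proof. by move/sphereE; rewrite -l2norm_eq0 => ->; rewrite oner_eq0. Qed.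

Lemma sphere_normalize y : y != 0 -> sphere R M (normalize y).
Proof.
rewrite -l2norm_gt0 => y_gt0; apply/sphereE.
by rewrite l2normZ gtr0_norm ?invr_gt0 // mulVf ?gt_eqF.
Qed.

Lemma normalize_sphere y : sphere R M y -> normalize y = y.
Proof. by move/sphereE; rewrite /normalize => ->; rewrite invr1 scale1r. Qed.

End Sphere.

Section CrossComplexRealization.
Variables (R : realType) (V : finType) (sig : V -> V).

Lemma realization_crossP (x : {ptws V -> R}) :
  realization R (cross_complex sig) x <->
  [/\ forall v, 0 <= x v, \sum_v x v = 1 & forall v, x v = 0 \/ x (sig v) = 0].
Proof.
have le0_eq0 v : 0 <= x v -> x v <= 0 -> x v = 0.
  by move=> ge0 le0; apply/eqP; rewrite eq_le le0 ge0.
split=> [[x_ge0 [x_sum /andP[_ /forallP x_cross]]]|[x_ge0 x_sum x_cross]].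
  split=> // v; have [x_gt0|x_le0] := ltrP 0 (x v); last by left; exact: le0_eq0.
  have /implyP := x_cross v; rewrite !inE => /(_ x_gt0).
  by rewrite -leNgt => ?; right; exact: le0_eq0.
split=> //; split=> //; apply/andP; split.
  apply/negP => /eqP supp0; move/eqP: x_sum; apply/negP.
  rewrite big1 ?(eq_sym 0) ?oner_eq0 // => v _; apply: le0_eq0 => //.
  by have := finset.in_set0 v; rewrite -supp0 inE => /negbT; rewrite -leNgt.
apply/forallP => u; apply/implyP; rewrite !inE => x_gt0.
by case: (x_cross u) => x0; rewrite x0 ltxx // in x_gt0 *.
Qed.

Section CrossSphere.
Variables (M : nat) (rep : 'I_M.+1 -> V) (idx : V -> 'I_M.+1).
Hypotheses (sigK : involutive sig) (sig_neq : forall v, sig v != v).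
Hypotheses (repK : cancel rep idx) (idx_sig : forall v, idx (sig v) = idx v).
Hypothesis idxK : forall v, rep (idx v) = v \/ rep (idx v) = sig v.

Let A := realization R (cross_complex sig).
Let S := sphere R M.

Definition pair_diffs (x : {ptws V -> R}) : 'rV[R]_M.+1 :=
  \row_k (x (rep k) - x (sig (rep k))).

Definition to_sphere (x : {ptws V -> R}) : 'rV[R]_M.+1 := normalize (pair_diffs x).

Definition orientation (v : V) : R := if rep (idx v) == v then 1 else -1.

Definition from_sphere (y : 'rV[R]_M.+1) : {ptws V -> R} :=
  fun v => Num.max (orientation v * y ord0 (idx v)) 0 / l1norm y.

Lemma orientation_sig v : orientation (sig v) = - orientation v.
Proof.
rewrite /orientation idx_sig; case: (idxK v) => ->; rewrite eqxx.
  by rewrite eq_sym (negbTE (sig_neq v)).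
by rewrite (negbTE (sig_neq v)) opprK.
Qed.

Lemma orientation_pair_diffs x v :
  orientation v * pair_diffs x ord0 (idx v) = x v - x (sig v).
Proof.
rewrite /orientation /pair_diffs mxE; case: (idxK v) => ->.
  by rewrite eqxx mul1r.
by rewrite (negbTE (sig_neq v)) sigK mulN1r opprB.
Qed.

Lemma sum_pairs (x : V -> R) :
  \sum_v x v = \sum_k (x (rep k) + x (sig (rep k))).
Proof.
rewrite (partition_big idx predT) //=; apply: eq_bigr => k _.
have rep_sig : sig (rep k) != rep k by exact: sig_neq.
rewrite (bigD1 (rep k)) ?repK //= (bigD1 (sig (rep k))) /=; last first.
  by rewrite idx_sig repK eqxx rep_sig.
rewrite big1 ?addr0 // => v /andP[/andP[/eqP <- v_rep] v_sig].
by case: (idxK v) => e; [move: v_rep|move: v_sig]; rewrite e ?sigK eqxx.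
Qed.

Lemma l1norm_pair_diffs x : A x -> l1norm (pair_diffs x) = 1.
Proof.
move/realization_crossP => [x_ge0 x_sum x_cross].
rewrite /l1norm -x_sum sum_pairs; apply: eq_bigr => k _; rewrite mxE.
by case: (x_cross (rep k)) => ->; rewrite ?sub0r ?subr0 ?normrN ?add0r ?addr0 ger0_norm.
Qed.

Lemma pair_diffs_neq0 x : A x -> pair_diffs x != 0.
Proof. by rewrite -l1norm_eq0 => /l1norm_pair_diffs ->; rewrite oner_eq0. Qed.

Lemma from_sphere_pair_diffs x : A x -> from_sphere (pair_diffs x) = x.
Proof.
move=> Ax; have /realization_crossP [x_ge0 _ x_cross] := Ax.
apply/funext => v; rewrite /from_sphere l1norm_pair_diffs // divr1.
rewrite orientation_pair_diffs; case: (x_cross v) => ->.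
  by rewrite sub0r; apply/max_idPr; rewrite oppr_le0.
by rewrite subr0; apply/max_idPl.
Qed.

Lemma from_sphereZ c y : 0 < c -> from_sphere (c *: y) = from_sphere y.
Proof.
move=> c_gt0; apply/funext => v; rewrite /from_sphere l1normZ gtr0_norm // mxE.
rewrite mulrCA -[X in Num.max _ X](mulr0 c) -maxr_pMr ?ltW // invfM mulrACA.
by rewrite divff ?mul1r // gt_eqF.
Qed.

Lemma from_sphere_rep y k : from_sphere y (rep k) = Num.max (y ord0 k) 0 / l1norm y.
Proof. by rewrite /from_sphere /orientation repK eqxx mul1r. Qed.

Lemma from_sphere_sig v y :
  from_sphere y (sig v) = Num.max (- (orientation v * y ord0 (idx v))) 0 / l1norm y.
Proof. by rewrite /from_sphere orientation_sig idx_sig mulNr. Qed.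

Lemma pair_diffs_from_sphere y : pair_diffs (from_sphere y) = (l1norm y)^-1 *: y.
Proof.
apply/rowP => k; rewrite !mxE from_sphere_sig from_sphere_rep.
by rewrite /orientation repK eqxx mul1r -mulrBl maxr0_subNr0 mulrC.
Qed.

Lemma from_sphere_realization y : y != 0 -> A (from_sphere y).
Proof.
rewrite -l1norm_gt0 => l1_gt0; apply/realization_crossP; split.
- by move=> v; rewrite divr_ge0 ?le_max ?lexx ?orbT ?ltW.
- rewrite sum_pairs; under eq_bigr do rewrite from_sphere_sig from_sphere_rep.
  under eq_bigr do rewrite /orientation repK eqxx mul1r -mulrDl maxr0_addNr0.
  by rewrite -mulr_suml divff ?gt_eqF.
- move=> v; rewrite from_sphere_sig /from_sphere.
  have [->|->] := maxr0_or_maxNr0_eq0 (orientation v * y ord0 (idx v)).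
    by left; rewrite mul0r.
  by right; rewrite mul0r.
Qed.

Lemma from_sphereK x : A x -> from_sphere (to_sphere x) = x.
Proof.
move=> Ax; rewrite /to_sphere /normalize from_sphereZ ?from_sphere_pair_diffs //.
by rewrite invr_gt0 l2norm_gt0 pair_diffs_neq0.
Qed.

Lemma to_sphereK y : S y -> to_sphere (from_sphere y) = y.
Proof.
move=> Sy; rewrite /to_sphere pair_diffs_from_sphere normalizeZ ?normalize_sphere //.
by rewrite invr_gt0 l1norm_gt0 sphere_neq0.
Qed.

Lemma pair_diffs_continuous : continuous pair_diffs.
Proof.
move=> x; apply: (@mx_continuous_at R 1 M.+1 _ pair_diffs x) => i k.
have -> : (fun t => pair_diffs t i k) = fun t => t (rep k) - t (sig (rep k)).
  by apply/funext => t /=; rewrite mxE.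
have eval_cont v : {for x, continuous (fun t : {ptws V -> R} => t v)}.
  exact: proj_continuous.
exact: (cvgB (eval_cont (rep k)) (eval_cont (sig (rep k)))).
Qed.

Lemma to_sphere_continuous : {within A, continuous to_sphere}.
Proof.
apply: continuous_in_subspaceT => x; rewrite inE => Ax.
have normalize_cont := normalize_continuous_at (pair_diffs_neq0 Ax).
exact: continuous_comp (@pair_diffs_continuous x) normalize_cont.
Qed.

Lemma from_sphere_continuous : {within S, continuous from_sphere}.
Proof.
apply: continuous_in_subspaceT => y; rewrite inE => Sy.
have l1_neq0 : l1norm y != 0 by rewrite l1norm_eq0 sphere_neq0.
have l1_cont : {for y, continuous (fun z => (l1norm z)^-1)}.
  exact: cvgV l1_neq0 (@l1norm_continuous _ _ y).
have const_cont (c : R) : {for y, continuous (fun _ : 'rV[R]_M.+1 => c)}.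
  exact: (@cst_continuous _ R c y).
apply: ptws_continuous_at => v.
have coord_cont := @coord_continuous R 1 M.+1 ord0 (idx v) y.
have max_cont : {for y, continuous (fun z : 'rV[R]_M.+1 =>
    Num.max (orientation v * z ord0 (idx v)) 0)}.
  exact: continuous_max (cvgM (const_cont _) coord_cont) (const_cont 0).
exact: cvgM max_cont l1_cont.
Qed.

Lemma cross_complex_sphere_of_transversal : homotopy_equivalent R A S.
Proof.
apply: (@homeomorphic_homotopy_equivalent R _ _ A S to_sphere from_sphere).
- exact: to_sphere_continuous.
- by move=> _ [x Ax <-]; exact/sphere_normalize/pair_diffs_neq0.
- exact: from_sphere_continuous.
- by move=> _ [y Sy <-]; exact/from_sphere_realization/sphere_neq0.
- exact: from_sphereK.
- exact: to_sphereK.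
Qed.

End CrossSphere.
End CrossComplexRealization.

Theorem cross_complex_homotopy_sphere (R : realType) (V : finType) (sig : V -> V)
    (M : nat) :
    involutive sig -> (forall v, sig v != v) -> #|V| = (M.+1).*2 ->
  homotopy_equivalent R (realization R (cross_complex sig)) (sphere R M).
Proof.
move=> sigK sig_neq cardV.
have [rep [idx [repK idx_sig idxK]]] := involution_transversal sigK sig_neq cardV.
exact: cross_complex_sphere_of_transversal.
Qed.

Theorem corollary6p3 (R : realType) (n : nat) :
  (0 < n)%N -> ~~ odd n ->
  homotopy_equivalent R
    (realization R
       (VR_simplex (@torus_dist n) (fdiam (@torus_dist n) - 1)))
    (sphere R ((n * n) %/ 2 - 1)).
Proof.
move=> n_gt0 n_even; rewrite VR_torus_cross_complex //.
apply: cross_complex_homotopy_sphere.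
- exact: torus_antipodeK.
- exact: torus_antipode_neq.
- exact: card_torus.
Qed.
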